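(* For $\delta\in(0,\tfrac16)$, let $\mathbb E[Q]$ be the stationary mean number of items in the FCFS matching model on the graph with nodes $\{1,2,3,4\}$ and edges $\{1,3\},\{1,4\},\{2,3\},\{2,4\},\{3,4\}$, and let $\mathbb E[\overline Q]$ be the same quantity for the complete graph on $\{1,2,3,4\}$ (i.e. after adding the edge $\{1,2\}$), both with arrival distribution $\alpha_1=\alpha_2=0.25-\delta$, $\alpha_3=0.5-\delta$, $\alpha_4=3\delta$. Then there exist numbers $0<\delta_1<\delta_2<\tfrac16$ with $\delta_1\approx0.0563$ and $\delta_2\approx 0.134$ such that a Braess paradox occurs, i.e. $\mathbb E[\overline Q]>\mathbb E[Q]$, if and only if $\delta\in(0,\delta_1)\cup(\delta_2,\tfrac16)$.
   Context: A matching model consists of a finite connected simple graph $\mathcal G=(\mathcal V,\xi)$ (the compatibility graph), $\mathcal V=\{1,\dots,n\}$, and a probability distribution $\alpha=(\alpha_1,\dots,\alpha_n)$ on $\mathcal V$ with all $\alpha_i>0$. In each time step an item of class $i$ arrives with probability proportional to $\alpha_i$ (time steps with no arrival do not affect stationary quantities). For $i\in\mathcal V$ let $\mathcal E(i)$ be the set of neighbours of $i$ in $\mathcal G$; for $V\subseteq\mathcal V$ let $\mathcal E(V)=\bigcup_{i\in V}\mathcal E(i)$ and $|\alpha_V|=\sum_{i\in V}\alpha_i$. The state of the system is a finite word $w=w_1\cdots w_q$ over $\mathcal V$ in which no two letters are adjacent in $\mathcal G$ (the classes of the unmatched items in order of arrival). Under the First Come First Served (FCFS) policy, if an item of class $i$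 arrives in state $w$: if some letter of $w$ lies in $\mathcal E(i)$, the first (oldest) such letter is deleted (the two items are matched and leave); otherwise $i$ is appended at the end of $w$. This defines a Markov chain $W$. An independent set is a non-empty subset of $\mathcal V$ no two of whose elements are adjacent; $\mathbb I$ denotes the set of independent sets of $\mathcal G$. The stability condition is $|\alpha_{\mathcal I}|<|\alpha_{\mathcal E(\mathcal I)}|$ for all $\mathcal I\in\mathbb I$; under it $W$ is positive recurrent with unique stationary distribution $\pi(w)=\pi_0\prod_{i=1}^q\alpha_{w_i}/|\alpha_{\mathcal E(\{w_1,\dots,w_i\})}|$. $Q$ is the number of items in the system (length of the word), and $\mathbb E[Q]$ its mean under the stationary distribution. Given two distinct non-adjacent nodes $i^*,j^*$ of $\mathcal G$, $\overline{\mathcal G}$ is $\mathcal G$ with the edge $\{i^*,j^*\}$ added and $\mathbb E[\overline Q]$ is the corresponding stationary mean for $\overline{\mathcal G}$ with the same $\alpha$. A Braess paradox occurs if $\mathbb E[\overline Q]>\mathbb E[Q]$. *)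

From HB Require Import structures.
From mathcomp Require Import all_boot all_order all_algebra.
From mathcomp Require Import all_classical all_reals all_analysis.
Set Implicit Arguments. Unset Strict Implicit. Unset Printing Implicit Defensive.
Import Order.TTheory GRing.Theory Num.Theory.
Import numFieldNormedType.Exports.
Local Open Scope ring_scope.

(* A matching model on the node set 'I_n (node k+1 of the paper is k : 'I_n):
   compatibility graph given by a (symmetric, irreflexive) relation adj,
   arrival distribution a : 'I_n -> R. *)

Definition nbhd (n : nat) (adj : rel 'I_n) (V : {set 'I_n}) : {set 'I_n} :=
  [set j | [exists i in V, adj i j]].

Definition alphaS (R : realType) (n : nat) (a : 'I_n -> R) (V : {set 'I_n}) : R :=
  \sum_(i in V) a i.

(* A state: a word in which no two letters are adjacent in the graph *)
Definition admissible (n : nat) (adj : rel 'I_n) (w : seq 'I_n) : bool :=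
  all2rel (fun x y => ~~ adj x y) w.

(* product-form weight of a state w = w_1...w_q (without the constant pi_0):
   prod_{i=1}^{q} alpha_{w_i} / |alpha_{E({w_1,...,w_i})}| *)
Definition pf_weight (R : realType) (n q : nat) (adj : rel 'I_n) (a : 'I_n -> R)
    (w : q.-tuple 'I_n) : R :=
  \prod_(i < q) (a (tnth w i) / alphaS a (nbhd adj [set x in take i.+1 w])).

Definition len_weight (R : realType) (n : nat) (adj : rel 'I_n) (a : 'I_n -> R)
    (q : nat) : R :=
  \sum_(w : q.-tuple 'I_n | admissible adj w) pf_weight adj a w.

Definition pi0 (R : realType) (n : nat) (adj : rel 'I_n) (a : 'I_n -> R) : R :=
  (limn (series (len_weight adj a)))^-1.

(* E[Q] = sum_w |w| pi(w) = pi_0 * sum_q q * (weight of states of length q) *)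
Definition meanQ (R : realType) (n : nat) (adj : rel 'I_n) (a : 'I_n -> R) : R :=
  pi0 adj a * limn (series (fun q => q%:R * len_weight adj a q)).

Definition add_edge (n : nat) (adj : rel 'I_n) (i j : 'I_n) : rel 'I_n :=
  fun x y => adj x y || ((x == i) && (y == j)) || ((x == j) && (y == i)).

Definition braess (R : realType) (n : nat) (adj : rel 'I_n) (a : 'I_n -> R)
    (i j : 'I_n) : Prop :=
  meanQ adj a < meanQ (add_edge adj i j) a.

(* The example: nodes 1,2,3,4 of the paper are 0,1,2,3 : 'I_4.
   Edges {1,3},{1,4},{2,3},{2,4},{3,4}. *)
Definition exG : rel 'I_4 :=
  fun x y => let u := nat_of_ord x in let v := nat_of_ord y in
    (u != v) && ~~ ((u <= 1)%N && (v <= 1)%N).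

Definition node (k : nat) : 'I_4 := inord k.

Definition exGbar : rel 'I_4 := add_edge exG (node 0) (node 1).

Definition exAlpha (R : realType) (d : R) : 'I_4 -> R :=
  fun x => match nat_of_ord x with
           | 0%N | 1%N => 4%:R^-1 - d
           | 2%N => 2%:R^-1 - d
           | _ => 3%:R * d
           end.

From HB Require Import structures.
From mathcomp Require Import all_boot all_order all_algebra.
From mathcomp Require Import all_classical all_reals all_analysis.
From mathcomp Require Import lra ring.
Set Implicit Arguments. Unset Strict Implicit. Unset Printing Implicit Defensive.
Import Order.TTheory GRing.Theory Num.Theory.
Import numFieldNormedType.Exports.
Local Open Scope classical_set_scope.
Local Open Scope ring_scope.

(* Both graphs are complete multipartite: exG has blocks {1,2}, {3}, {4}, and
   the completed graph has four singleton blocks.  In such a graph a nonempty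
   admissible word lies inside one block V_k, every prefix has neighbourhood the
   complement of V_k, so the words of length q carry total weight
   sum_k rho_k^q with rho_k = alpha(V_k) / alpha(complement of V_k).  Summing
   geometric series gives
     E[Q] = (sum_k a_k (1 - a_k) / (1 - 2 a_k)^2) / (1 + sum_k a_k / (1 - 2 a_k)),
   a_k = alpha(V_k).  For the given alpha, E[Qbar] - E[Q] is then a positive
   multiple of the quintic braess_poly.  This quintic is strictly convex on
   [0, 1/6] (its second divided difference is positive there), so it is positive
   exactly outside the segment between its two roots, which the intermediate
   value theorem locates in (0.0562, 0.0564) and (0.133, 0.135). *)

Section NormedSeries.
Variables (K : numFieldType) (V : normedModType K).

Lemma cvg_series_recl (u : V^nat) l :
  series (fun q => u q.+1) @ \oo --> l -> series u @ \oo --> u 0%N + l.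
Proof.
move=> ul; rewrite -cvg_shiftS.
have -> : [sequence series u n.+1]_n = fun n => u 0%N + series (fun q => u q.+1) n.
  by apply/funext => n; rewrite /= !seriesEnat /= big_nat_recl.
by apply: cvgD => //; exact: cvg_cst.
Qed.

Lemma cvg_series_sum (I : finType) (f : I -> V^nat) (l : I -> V) :
  (forall i, series (f i) @ \oo --> l i) ->
  series (fun q => \sum_i f i q) @ \oo --> \sum_i l i.
Proof.
move=> fl; have -> : series (fun q => \sum_i f i q) = fun n => \sum_i series (f i) n.
  by apply/funext => n; rewrite /= !seriesEnat /= exchange_big.
by apply: cvg_big => [|i _]; [exact: add_continuous | exact: fl].
Qed.
End NormedSeries.


Lemma cvg_series_exprS (R : archiRealFieldType) (z : R) : `|z| < 1 ->
  series (fun q => z ^+ q.+1) @ \oo --> z / (1 - z).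
Proof.
move=> z1; have -> : (fun q => z ^+ q.+1) = geometric z z.
  by apply/funext => q; rewrite /= exprS.
exact: cvg_geometric_series.
Qed.

Lemma series_nat_mul_exprE (R : fieldType) (z : R) n : z != 1 ->
  series (fun q => q%:R * z ^+ q) n =
  (z - z ^+ n.+1) / (1 - z) ^+ 2 - n%:R * z ^+ n / (1 - z).
Proof.
move=> z_neq1; have : 1 - z != 0 by rewrite subr_eq0 eq_sym.
elim: n => [|n IH] z1; first by rewrite seriesEnat /= big_geq // expr1 subrr !mul0r subr0.
by rewrite seriesSr IH // !exprS -natr1; field.
Qed.

Lemma cvg_series_nat_mul_expr (R : realType) (z : R) : 0 <= z -> z < 1 ->
  series (fun q => q%:R * z ^+ q) @ \oo --> z / (1 - z) ^+ 2.
Proof.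
move=> z0 z1; have z_neq1 : z != 1 by rewrite lt_eqF.
have z1_gt0 : 0 < 1 - z by rewrite subr_gt0.
have seriesE := funext (fun n => series_nat_mul_exprE n z_neq1).
(* The series converges, being nondecreasing and bounded, so q z^q -> 0,
   which is all the closed form needs. *)
have : cvgn (series (fun q => q%:R * z ^+ q)).
  apply: nondecreasing_is_cvgn.
    by apply: nondecreasing_series => n _ _; rewrite mulr_ge0 ?exprn_ge0.
  exists (z / (1 - z) ^+ 2) => _ [n _ <-]; rewrite seriesE lerBlDr -[leLHS]addr0.
  apply: lerD; last by rewrite divr_ge0 ?mulr_ge0 ?exprn_ge0 // ltW.
  by rewrite ler_pM2r ?invr_gt0 ?exprn_gt0 // gerBl exprn_ge0.
move=> /cvg_series_cvg_0 nzn_cvg0; rewrite seriesE.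
have -> : z / (1 - z) ^+ 2 = (z - 0) / (1 - z) ^+ 2 - 0 / (1 - z).
  by rewrite subr0 mul0r subr0.
apply: cvgB; last exact: cvgMr_tmp nzn_cvg0.
apply: cvgMr_tmp; apply: cvgB; first exact: cvg_cst.
have -> : (fun n => z ^+ n.+1) = fun n => z * z ^+ n.
  by apply/funext => n; rewrite exprS.
rewrite -(mulr0 z); apply: cvgMl_tmp; apply: cvg_expr.
by rewrite ger0_norm.
Qed.

Lemma sum_prod_tuples (R : comPzSemiRingType) (T : finType) (V : {set T})
    (F : T -> R) q :
  \sum_(w : q.-tuple T | all [in V] w) \prod_(i < q) F (tnth w i) =
  (\sum_(x in V) F x) ^+ q.
Proof.
rewrite -[q in RHS]card_ord -prodr_const bigA_distr_big.
rewrite (reindex (@finfun_of_tuple _ q)); last first.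
  by exists tuple_of_finfun => x _; [exact: finfun_of_tupleK | exact: tuple_of_finfunK].
apply: eq_big => [w | w _]; last by apply: eq_bigr => i _; rewrite ffunE.
apply/all_tnthP/ffun_onP => [wV i | wV i]; last by have := wV i; rewrite ffunE.
by rewrite ffunE; exact: wV.
Qed.

Lemma len_weight0 (R : realType) n (adj : rel 'I_n) (a : 'I_n -> R) :
  len_weight adj a 0 = 1.
Proof.
rewrite /len_weight (big_pred1 [tuple]) => [|w]; last by rewrite tuple0.
by rewrite /pf_weight big_ord0.
Qed.

Section CompleteMultipartite.
Variables (R : realType) (n m : nat) (part : 'I_n -> 'I_m).
Variables (adj : rel 'I_n) (a : 'I_n -> R).
Hypothesis adjE : forall x y, adj x y = (part x != part y).

Definition block k : {set 'I_n} := [set x | part x == k].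

Definition block_load k : R := alphaS a (block k) / alphaS a (~: block k).

Lemma admissible_cons x s :
  admissible adj (x :: s) = all [in block (part x)] (x :: s).
Proof.
apply/allrelP/allP => [xsE y ys | xsE y z ys zs].
  by have := xsE y x ys (mem_head _ _); rewrite adjE negbK inE.
by have := xsE y ys; have := xsE z zs; rewrite !inE adjE => /eqP-> /eqP->; rewrite eqxx.
Qed.

Lemma nbhd_block (S : {set 'I_n}) k x :
  {subset S <= block k} -> x \in S -> nbhd adj S = ~: block k.
Proof.
move=> Sk Sx; apply/setP => j; rewrite !inE.
have partE i : i \in S -> part i = k by move=> /Sk; rewrite inE => /eqP.
apply/existsP/idP => [[i /andP [Si]] | jk]; first by rewrite adjE partE // eq_sym.
by exists x; rewrite Sx adjE partE // eq_sym.
Qed.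

Lemma pf_weight_block q (w : q.-tuple 'I_n) k : all [in block k] w ->
  pf_weight adj a w = \prod_(i < q) (a (tnth w i) / alphaS a (~: block k)).
Proof.
move=> /allP wk; apply: eq_bigr => i _; rewrite (@nbhd_block _ k (tnth w i)) //.
  by move=> x; rewrite inE => /mem_take /wk.
rewrite inE (tnth_nth (tnth w i)).
by rewrite -(nth_take _ (ltnSn i)) mem_nth // size_takel ?size_tuple.
Qed.

Lemma len_weight_block q :
  len_weight adj a q.+1 = \sum_k block_load k ^+ q.+1.
Proof.
rewrite /len_weight (partition_big (fun w : q.+1.-tuple _ => part (thead w)) xpredT) //.
apply: eq_bigr => k _; rewrite /block_load {1}/alphaS mulr_suml -sum_prod_tuples.
have blockE (w : q.+1.-tuple 'I_n) :
    admissible adj w && (part (thead w) == k) = all [in block k] w.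
  case: w => [[//|x s] size_w]; rewrite /thead (tnth_nth x) /= admissible_cons.
  rewrite /= !inE eqxx /=.
  by case: (part x =P k) => [<- | _]; rewrite ?andbT ?andbF.
by apply: eq_big => [w | w]; rewrite blockE // => /pf_weight_block.
Qed.

Lemma alphaS_setC (V : {set 'I_n}) :
  alphaS a (~: V) = alphaS a [set: 'I_n] - alphaS a V.
Proof.
by rewrite /alphaS [in RHS](big_setID V) finset.setTI finset.setTD /= addrC addrK.
Qed.

Hypothesis mass1 : alphaS a [set: 'I_n] = 1.
(* Every independent set lies in a block, so this is the stability condition. *)
Hypothesis stable : forall k, 0 <= alphaS a (block k) < 2^-1.

Lemma block_loadE k :
  block_load k = alphaS a (block k) / (1 - alphaS a (block k)).
Proof. by rewrite /block_load alphaS_setC mass1. Qed.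

Lemma block_load_ge0_lt1 k : 0 <= block_load k < 1.
Proof.
have /andP [] := stable k; rewrite block_loadE; set s := alphaS a _ => s_ge0 s_lt.
have s1_gt0 : 0 < 1 - s by lra.
apply/andP; split; first exact: divr_ge0 s_ge0 (ltW s1_gt0).
by rewrite ltr_pdivrMr // mul1r; lra.
Qed.

Lemma cvg_series_len_weight :
  series (len_weight adj a) @ \oo --> 1 + \sum_k block_load k / (1 - block_load k).
Proof.
rewrite -[X in X + _](len_weight0 adj a); apply: cvg_series_recl.
have -> : (fun q => len_weight adj a q.+1) = fun q => \sum_k block_load k ^+ q.+1.
  by apply/funext => q; exact: len_weight_block.
apply: cvg_series_sum => k; have /andP [load_ge0 load_lt1] := block_load_ge0_lt1 k.
by apply: cvg_series_exprS; rewrite ger0_norm.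
Qed.

Lemma cvg_series_nat_len_weight :
  series (fun q => q%:R * len_weight adj a q) @ \oo -->
    \sum_k block_load k / (1 - block_load k) ^+ 2.
Proof.
have -> : (fun q => q%:R * len_weight adj a q) =
          fun q => \sum_k q%:R * block_load k ^+ q.
  apply/funext => -[|q]; first by rewrite mul0r big1 // => k _; rewrite mul0r.
  by rewrite len_weight_block mulr_sumr.
apply: cvg_series_sum => k; have /andP [load_ge0 load_lt1] := block_load_ge0_lt1 k.
exact: cvg_series_nat_mul_expr.
Qed.

Lemma meanQ_complete_multipartite :
  meanQ adj a =
  (\sum_k alphaS a (block k) * (1 - alphaS a (block k))
           / (1 - 2 * alphaS a (block k)) ^+ 2)
  / (1 + \sum_k alphaS a (block k) / (1 - 2 * alphaS a (block k))).
Proof.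
rewrite /meanQ /pi0 mulrC (cvg_lim _ cvg_series_len_weight) //.
rewrite (cvg_lim _ cvg_series_nat_len_weight) //.
congr (_ / (1 + _)); apply: eq_bigr => k _; rewrite block_loadE;
  have /andP [] := stable k; set s := alphaS a _ => s_ge0 s_lt;
  by field; apply/andP; split; apply: lt0r_neq0; lra.
Qed.
End CompleteMultipartite.

Section ConvexSign.
Variables (R : realDomainType) (f : R -> R) (lo hi : R).
Hypothesis f_chord : forall x y z, lo <= x -> x < y -> y < z -> z <= hi ->
  (z - x) * f y < (z - y) * f x + (y - x) * f z.

Lemma convex_gt0_iff_outside_roots u1 u2 u :
  lo <= u1 -> u1 < u2 -> u2 <= hi -> f u1 = 0 -> f u2 = 0 -> lo <= u -> u <= hi ->
  0 < f u <-> u < u1 \/ u2 < u.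
Proof.
move=> lo_u1 u12 u2_hi fu1 fu2 lo_u u_hi; split => [fu_gt0 | [u_lt | u_gt]].
- case: (ltP u u1) => [|u1_le]; first by left.
  case: (ltP u2 u) => [|u_le]; first by right.
  have [u_eq|u1_neq] := eqVneq u u1; first by rewrite u_eq fu1 ltxx in fu_gt0.
  have [u_eq|u2_neq] := eqVneq u u2; first by rewrite u_eq fu2 ltxx in fu_gt0.
  have u1_lt : u1 < u by rewrite lt_neqAle eq_sym u1_neq.
  have u_lt2 : u < u2 by rewrite lt_neqAle u2_neq.
  have := f_chord lo_u1 u1_lt u_lt2 u2_hi; rewrite fu1 fu2 !mulr0 addr0; nra.
- have := f_chord lo_u u_lt u12 u2_hi; rewrite fu1 fu2 !mulr0 addr0; nra.
- have := f_chord lo_u1 u12 u_gt u_hi; rewrite fu1 fu2 !mulr0 add0r; nra.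
Qed.
End ConvexSign.

Lemma IVT_sign_change (R : realType) (f : R -> R) a b :
  continuous f -> a <= b -> f a * f b < 0 -> exists2 c, a < c < b & f c = 0.
Proof.
move=> f_cont ab fab_lt0.
have fa_neq0 : f a != 0 by apply: contraTneq fab_lt0 => ->; rewrite mul0r ltxx.
have fb_neq0 : f b != 0 by apply: contraTneq fab_lt0 => ->; rewrite mulr0 ltxx.
have f0 : Num.min (f a) (f b) <= 0 <= Num.max (f a) (f b).
  rewrite ge_min le_max; case: (ltP (f a) 0) => [fa_lt0 | fa_ge0].
    have fb_gt0 : 0 < f b by nra.
    by rewrite (ltW fa_lt0) (ltW fb_gt0) orbT.
  have fb_lt0 : f b < 0 by nra.
  by rewrite (ltW fb_lt0) orbT.
have [c] := IVT ab (continuous_subspaceT f_cont) f0.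
rewrite in_itv /= => /andP [ac cb] fc0; exists c => //.
rewrite !lt_neqAle ac cb !andbT; apply/andP; split; apply/eqP => ceq.
  by rewrite ceq fc0 eqxx in fa_neq0.
by rewrite -ceq fc0 eqxx in fb_neq0.
Qed.

Definition braess_poly (R : pzRingType) (d : R) : R :=
  1 - 26 * d + 152 * d ^+ 2 - 112 * d ^+ 3 + 384 * d ^+ 4 - 2304 * d ^+ 5.

Section BraessPolynomial.
Variable R : realType.

Lemma braess_poly_divdiff2_gt0 (x y z : R) :
  0 <= x -> x <= 6^-1 -> 0 <= y -> y <= 6^-1 -> 0 <= z -> z <= 6^-1 ->
  0 < 152 - 112 * (x + y + z) + 384 * (x ^+ 2 + y ^+ 2 + z ^+ 2 + x * y + y * z + z * x)
    - 2304 * (x ^+ 3 + y ^+ 3 + z ^+ 3 + x ^+ 2 * y + x ^+ 2 * z + y ^+ 2 * x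
              + y ^+ 2 * z + z ^+ 2 * x + z ^+ 2 * y + x * y * z).
Proof.
(* Each of x^3, y^3, z^3, xyz, x^2z, y^2z is at most 6^-1 times a distinct
   quadratic monomial; the remaining four cubic monomials are at most 6^-3. *)
move=> x0 x1 y0 y1 z0 z1.
have sq_mul (u v w : R) : 0 <= u -> 0 <= v -> w <= 6^-1 -> 0 <= u * v * (1 - 6 * w).
  by move=> u0 v0 w1; rewrite !mulr_ge0 //; lra.
have cube_le (u v : R) : 0 <= u -> u <= 6^-1 -> 0 <= v -> v <= 6^-1 -> u * u * v <= 216^-1.
  move=> u0 u1 v0 v1; have uu : u * u <= 36^-1 by nra.
  by apply: le_trans (ler_pM _ _ uu v1) _; rewrite ?mulr_ge0 //; lra.
have := sq_mul x x x x0 x0 x1; have := sq_mul y y y y0 y0 y1; have := sq_mul z z z z0 z0 z1.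
have := sq_mul x y z x0 y0 z1; have := sq_mul x z x x0 z0 x1; have := sq_mul y z y y0 z0 y1.
have := cube_le x y x0 x1 y0 y1; have := cube_le y x y0 y1 x0 x1.
have := cube_le z x z0 z1 x0 x1; have := cube_le z y z0 z1 y0 y1.
lra.
Qed.

Lemma braess_poly_chord (x y z : R) : 0 <= x -> x < y -> y < z -> z <= 6^-1 ->
  (z - x) * braess_poly y < (z - y) * braess_poly x + (y - x) * braess_poly z.
Proof.
move=> x_ge0 xy yz z_le.
have [x_le y_ge0 y_le z_ge0] : [/\ x <= 6^-1, 0 <= y, y <= 6^-1 & 0 <= z].
  by split; lra.
have := braess_poly_divdiff2_gt0 x_ge0 x_le y_ge0 y_le z_ge0 z_le.
(* D is the second divided difference of braess_poly at x, y, z. *)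
set D := (X in 0 < X) => D_gt0.
rewrite -subr_gt0 (_ : _ - _ = (y - x) * (z - y) * (z - x) * D).
  by rewrite !mulr_gt0 // subr_gt0 // (lt_trans xy yz).
by rewrite /braess_poly /D; ring.
Qed.

Lemma continuous_braess_poly : continuous (@braess_poly R).
Proof.
have -> : @braess_poly R = horner (Poly [:: 1; -26; 152; -112; 384; -2304]).
  by apply/funext => d; rewrite horner_Poly /= /braess_poly; ring.
exact: continuous_horner.
Qed.

End BraessPolynomial.

(* Nodes 1 and 2 form block 0; nodes 3 and 4 are the blocks 1 and 2. *)
Definition exG_part (x : 'I_4) : 'I_3 := inord x.-1.

Lemma exG_complete_multipartite x y : exG x y = (exG_part x != exG_part y).
Proof.
by case: x => [[|[|[|[|//]]]] ?]; case: y => [[|[|[|[|//]]]] ?];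
  rewrite /exG_part -(inj_eq val_inj) /= !inordK.
Qed.

Lemma exGbar_complete x y : exGbar x y = (x != y).
Proof.
by case: x => [[|[|[|[|//]]]] ?]; case: y => [[|[|[|[|//]]]] ?];
  rewrite /exGbar /add_edge /node -!(inj_eq val_inj) /= ?inordK.
Qed.

Section Example.
Variables (R : realType) (d : R).

Lemma exAlpha_mass : alphaS (exAlpha d) [set: 'I_4] = 1.
Proof.
rewrite /alphaS (eq_bigl xpredT) => [|i]; last by rewrite inE.
rewrite !big_ord_recl big_ord0 /exAlpha /=; lra.
Qed.

Lemma exAlpha_exG_blocks k :
  alphaS (exAlpha d) (block exG_part k) = [:: 2^-1 - 2 * d; 2^-1 - d; 3 * d]`_k.
Proof.
case: k => [[|[|[|//]]] ?]; rewrite /alphaS big_mkcond /= !big_ord_recl big_ord0;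
  rewrite !inE /exG_part -!(inj_eq val_inj) /= ?inordK //= /exAlpha /=; lra.
Qed.

Lemma exAlpha_singletons k : alphaS (exAlpha d) (block id k) = exAlpha d k.
Proof. by rewrite /alphaS (big_pred1 k) // => i; rewrite inE. Qed.

Lemma braess_exG_iff : 0 < d -> d < 6^-1 ->
  braess exG (exAlpha d) (node 0) (node 1) <-> 0 < braess_poly d.
Proof.
move=> d_gt0 d_lt; rewrite /braess -/exGbar.
rewrite (meanQ_complete_multipartite exG_complete_multipartite exAlpha_mass); last first.
  by move=> k; rewrite exAlpha_exG_blocks; case: k => [[|[|[|//]]] ?] /=; lra.
rewrite (meanQ_complete_multipartite (part := id) exGbar_complete exAlpha_mass); last first.
  by move=> k; rewrite exAlpha_singletons /exAlpha; case: k => [[|[|[|[|//]]]] ?] /=; lra.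
rewrite !big_ord_recr !big_ord0 /= !exAlpha_exG_blocks !exAlpha_singletons /exAlpha /=.
pose D := 24 * d * (1 + 4 * d) * (1 - 2 * d) * (1 + 8 * d - 24 * d ^+ 2).
have D_gt0 : 0 < D by rewrite /D; repeat apply: mulr_gt0; nra.
rewrite -subr_gt0 (_ : _ - _ = braess_poly d / D); first by rewrite pmulr_lgt0 ?invr_gt0.
rewrite /braess_poly /D; field.
by repeat (apply/andP; split); apply: lt0r_neq0; nra.
Qed.
End Example.

Theorem mainTheorem3 (R : realType) :
  exists d1 d2 : R,
    [/\ (0 < d1) && (d1 < d2) && (d2 < 6%:R^-1),
        `|d1 - 563%:R / 10000%:R| < 10000%:R^-1,
        `|d2 - 134%:R / 1000%:R| < 1000%:R^-1 &
        forall d : R, 0 < d -> d < 6%:R^-1 ->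
          (braess exG (exAlpha d) (node 0) (node 1) <->
           (d < d1 \/ d2 < d))].
Proof.
have [d1 /andP [d1_lo d1_hi] P_d1] :
    exists2 d1 : R, 562 / 10000 < d1 < 564 / 10000 & braess_poly d1 = 0.
  apply: IVT_sign_change; [exact: continuous_braess_poly | lra | rewrite /braess_poly; lra].
have [d2 /andP [d2_lo d2_hi] P_d2] :
    exists2 d2 : R, 133 / 1000 < d2 < 135 / 1000 & braess_poly d2 = 0.
  apply: IVT_sign_change; [exact: continuous_braess_poly | lra | rewrite /braess_poly; lra].
have [d1_gt0 d12 d2_lt6] : [/\ 0 < d1, d1 < d2 & d2 < 6^-1] by split; lra.
exists d1, d2; split.
- by rewrite d1_gt0 d12 d2_lt6.
- by rewrite ltr_norml; apply/andP; split; lra.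
- by rewrite ltr_norml; apply/andP; split; lra.
move=> d d_gt0 d_lt; rewrite braess_exG_iff //.
exact: (convex_gt0_iff_outside_roots (@braess_poly_chord R) (ltW d1_gt0) d12 (ltW d2_lt6)
  P_d1 P_d2 (ltW d_gt0) (ltW d_lt)).
Qed.
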